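(* For every integer $k \geq 2$, there exists a $k$-de Bruijn L-array.
   Context: Fix an integer $k\ge 2$. Consider a $k \times k^2$ array $A$ with entries in $\{0,\dots,k-1\}$, with rows indexed by $i\in\{0,\dots,k-1\}$ and columns by $j\in\{0,\dots,k^2-1\}$, regarded cyclically (row indices taken mod $k$, column indices taken mod $k^2$, i.e. the left side is glued to the right side and the top to the bottom). An L-position is a pair $(i,j)$ with $0\le i\le k-1$, $0\le j\le k^2-1$; the L-filling read at $(i,j)$ is the triple $(a,b,d)=(A(i,j),\,A(i+1 \bmod k,\,j),\,A(i+1 \bmod k,\,j+1 \bmod k^2))$, i.e. a $2\times 2$ block with its upper-right cell removed: $a$ is the upper-left cell, $b$ the cell directly below $a$, and $d$ the cell directly to the right of $b$. There are $k^3$ L-positions and $k^3$ possible triples in $\{0,\dots,k-1\}^3$. The array $A$ is a $k$-de Bruijn L-array if every triple $(a,b,d)\in\{0,\dots,k-1\}^3$ is the L-filling read at exactly one L-position. *)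

From mathcomp Require Import all_boot.
Set Implicit Arguments. Unset Strict Implicit. Unset Printing Implicit Defensive.

(* A k x k^2 array with entries in {0,...,k-1}; rows 'I_k, columns 'I_(k^2),
   indices taken cyclically (ordS = successor mod n). *)
Definition Larray (k : nat) := 'I_k -> 'I_(k ^ 2) -> 'I_k.

Definition Lfilling (k : nat) (A : Larray k) (p : 'I_k * 'I_(k ^ 2))
  : 'I_k * 'I_k * 'I_k :=
  let: (i, j) := p in
  (A i j, A (ordS i) j, A (ordS i) (ordS j)).

Definition is_deBruijn_Larray (k : nat) (A : Larray k) : Prop :=
  forall t : 'I_k * 'I_k * 'I_k,
    #|[pred p : 'I_k * 'I_(k ^ 2) | Lfilling A p == t]| = 1.

From mathcomp Require Import all_boot ssralg zmodp.
From mathcomp Require Import ring.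

(* Write k = n + 2 and compute in the ring Z/kZ, whose carrier 'Z_k is the
   ordinal type 'I_k.  A column j < k^2 has base-k digits j = q*k + r
   (q = hi j, r = lo j), and the array is A(i, j) = q + i*r in Z/kZ.  The
   L-filling at (i, j) is then (q + i r, q + (i+1) r, d) where, moving one
   column to the right,
   - if r < k-1 the column j+1 has digits (q, r+1), so d = q + (i+1)(r+1);
   - if r = k-1 the column j+1 has digits (q+1, 0), so d = q + 1, and r = -1.
   In both cases the triple determines r, then i and q (ring identities in
   Z/kZ), hence the L-position: the L-filling map is injective.  Since there
   are k^3 positions and k^3 triples, every fibre of an injective map between
   finite sets of equal size is a singleton, which is the de Bruijn property. *)

Import GRing.Theory.

Lemma card_fibers_injective (T U : finType) (f : T -> U) :
  injective f -> #|T| = #|U| -> forall u, #|[pred x | f x == u]| = 1.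
Proof.
move=> f_inj cardTU u.
have /codomP[x ->] : u \in codom f by apply: inj_card_onto; rewrite ?cardTU.
rewrite -(card1 x); apply: eq_card => y.
by rewrite !inE (inj_eq f_inj).
Qed.

Local Open Scope ring_scope.

Lemma vertical_readings_step {R : comPzRingType} {h l x h' l' x' : R} :
    h + x * l = h' + x' * l' ->
    h + (x + 1) * l = h' + (x' + 1) * l' ->
  l = l'.
Proof.
move=> Ea Eb.
transitivity ((h + (x + 1) * l) - (h + x * l)); first by ring.
by rewrite Ea Eb; ring.
Qed.

(* Adding the diagonal reading h + (x+1)(l+1) determines x and h as well:
   this is the injectivity of the L-filling away from a carry. *)
Lemma affine_readings_inj {R : comPzRingType} {h l x h' l' x' : R} :
    h + x * l = h' + x' * l' ->
    h + (x + 1) * l = h' + (x' + 1) * l' ->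
    h + (x + 1) * (l + 1) = h' + (x' + 1) * (l' + 1) ->
  [/\ h = h', l = l' & x = x'].
Proof.
move=> Ea Eb Ed; have El := vertical_readings_step Ea Eb.
have Ex : x = x'.
  apply: (addIr 1).
  transitivity ((h + (x + 1) * (l + 1)) - (h + (x + 1) * l)); first by ring.
  by rewrite Ed Eb; ring.
split=> //; transitivity ((h + x * l) - x * l); first by ring.
by rewrite Ea El Ex; ring.
Qed.

Section DeBruijnArray.
Variable n : nat.
Local Notation k := n.+2.

Lemma hi_digit_lt (j : 'I_(k ^ 2)) : (j %/ k < k)%N.
Proof. by rewrite ltn_divLR // mulnn ltn_ord. Qed.

Lemma col_succ_nocarry {j : 'I_(k ^ 2)} : ((j %% k).+1 < k)%N ->
  (ordS j %/ k = j %/ k)%N /\ (ordS j %% k = (j %% k).+1)%N.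
Proof.
move=> r_lt.
have Ej : j.+1 = (j %/ k * k + (j %% k).+1)%N by rewrite addnS -divn_eq.
have j1_lt : (j.+1 < k ^ 2)%N.
  suff : (j.+1 < k * k)%N by rewrite mulnn.
  rewrite Ej (leq_trans (_ : _ < (j %/ k).+1 * k)%N) //.
    by rewrite mulSn [(k + _)%N]addnC ltn_add2l.
  by rewrite leq_mul2r hi_digit_lt orbT.
rewrite /= (modn_small j1_lt) Ej divnMDl // (divn_small r_lt) addn0.
by rewrite modnMDl modn_small.
Qed.

Lemma col_succ_carry {j : 'I_(k ^ 2)} : (j %% k).+1 = k ->
  (ordS j %/ k = (j %/ k).+1 %% k)%N /\ (ordS j %% k = 0)%N.
Proof.
move=> r_last.
have Ej : j.+1 = ((j %/ k).+1 * k)%N.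
  by rewrite {1}(divn_eq j k) -addnS r_last mulSn addnC.
rewrite /= Ej; move: (j %/ k) => q.
by rewrite -mulnn -muln_modl mulnK // modnMl.
Qed.

Lemma natZp_inj {x y : nat} : (x < k)%N -> (y < k)%N ->
  x%:R = y%:R :> 'Z_k -> x = y.
Proof.
move=> x_lt y_lt; rewrite !Zp_nat => /(congr1 val).
by rewrite [in LHS]/= [in RHS]/= !modn_small.
Qed.

Definition hi (j : 'I_(k ^ 2)) : 'Z_k := (j %/ k)%:R.
Definition lo (j : 'I_(k ^ 2)) : 'Z_k := (j %% k)%:R.

Lemma digits_inj {j j' : 'I_(k ^ 2)} : hi j = hi j' -> lo j = lo j' -> j = j'.
Proof.
move=> /(natZp_inj (hi_digit_lt j) (hi_digit_lt j')) Eh.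
move=> /(natZp_inj (ltn_pmod j (ltn0Sn _)) (ltn_pmod j' (ltn0Sn _))) El.
by apply: val_inj; rewrite /= (divn_eq j k) (divn_eq j' k) Eh El.
Qed.

Lemma hi_lo_succ {j : 'I_(k ^ 2)} : ((j %% k).+1 < k)%N ->
  hi (ordS j) = hi j /\ lo (ordS j) = lo j + 1.
Proof. by move=> /col_succ_nocarry[Eq Er]; rewrite /hi /lo Eq Er natr1. Qed.

Lemma hi_lo_succ_carry {j : 'I_(k ^ 2)} : (j %% k).+1 = k ->
  [/\ hi (ordS j) = hi j + 1, lo (ordS j) = 0 & lo j = -1].
Proof.
move=> r_last; have [Eq Er] := col_succ_carry r_last.
split; first by rewrite /hi Eq Zp_nat_mod // natr1.
  by rewrite /lo Er.
by apply/eqP; rewrite -addr_eq0 /lo natr1 r_last -Zp_nat_mod // modnn.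
Qed.

Lemma ordS_Zp (i : 'I_k) : ordS i = i + 1 :> 'Z_k.
Proof. by apply: val_inj; rewrite /= modnDmr addn1. Qed.

Definition deBruijn_array : Larray k := fun i j => hi j + (i : 'Z_k) * lo j.

Lemma deBruijn_array_inj : injective (Lfilling deBruijn_array).
Proof.
move=> [i j] [i' j'] /eqP.
rewrite !xpair_eqE => /andP[/andP[/eqP Ea /eqP Eb] /eqP Ed].
rewrite /deBruijn_array !ordS_Zp in Ea Eb Ed.
have r_lt : (j %% k < k)%N by rewrite ltn_pmod.
have r'_lt : (j' %% k < k)%N by rewrite ltn_pmod.
have Elo : lo j = lo j' := vertical_readings_step Ea Eb.
have Er : j %% k = j' %% k := natZp_inj r_lt r'_lt Elo.
move: r_lt; rewrite leq_eqVlt => /orP[/eqP r_last | r_nolast].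
- (* carry: the diagonal reading is hi j + 1, and lo j = -1 *)
  have [Eh1 El1 ElN] := hi_lo_succ_carry r_last.
  rewrite Er in r_last; have [Eh1' El1' ElN'] := hi_lo_succ_carry r_last.
  rewrite Eh1 El1 Eh1' El1' !mulr0 !addr0 in Ed; have Ehi := addIr _ Ed.
  rewrite ElN ElN' Ehi !mulrN1 in Ea; have Ei := oppr_inj (addrI _ Ea).
  by rewrite Ei (digits_inj Ehi Elo).
- (* no carry: the three readings are affine in the digits *)
  have [Eh1 El1] := hi_lo_succ r_nolast.
  rewrite Er in r_nolast; have [Eh1' El1'] := hi_lo_succ r_nolast.
  rewrite Eh1 El1 Eh1' El1' in Ed.
  have [Ehi _ Ei] := affine_readings_inj Ea Eb Ed.
  by rewrite Ei (digits_inj Ehi Elo).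
Qed.

End DeBruijnArray.

Local Close Scope ring_scope.

Theorem theorem2 (k : nat) (hk : 2 <= k) :
  exists A : Larray k, is_deBruijn_Larray A.
Proof.
case: k hk => [|[|n]] // _.
exists (deBruijn_array n).
apply: card_fibers_injective; first exact: deBruijn_array_inj.
by rewrite !card_prod !card_ord mulnA.
Qed.
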